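(* Let $f \in C^1(\mathcal{T})$ and $g \in C^1([0,1])$, where $\mathcal{T}=\{(x,y)\in\mathbb{R}^2: 0\le y\le x\le 1\}$, and set $M_f=\sup_{(x,y)\in\mathcal{T}}|f(x,y)|$. Let $k\in C^1(\mathcal{T})$ be the solution of the Goursat problem $$k_y(x,y)+k_x(x,y)=f(x,y)-\int_y^x f(x,\eta)k(\eta,y)\,d\eta \ \ \forall (x,y)\in\mathcal{T},\qquad k(1,y)=0\ \ \forall y\in[0,1],$$ and define the observer gain $p_1(x)=g(x)-k(x,0)$. Consider the plant $$u_t(x,t)=u_x(x,t)+g(x)u(0,t)+\int_0^x f(x,y)u(y,t)\,dy,\qquad u(1,t)=U(t),\qquad Y(t)=u(0,t),$$ with initial condition $u(\cdot,0)=u_0$, and the observer $$\hat u_t(x,t)=\hat u_x(x,t)+g(x)\hat u(0,t)+\int_0^x f(x,y)\hat u(y,t)\,dy+p_1(x)\,[u(0,t)-\hat u(0,t)],\qquad \hat u(1,t)=U(t),$$ with initial condition $\hat u(\cdot,0)=\hat u_0$. Let $U\in C^1(\mathbb{R}^+)$ and $u_0,\hat u_0\in C^1([0,1])$ satisfy the compatibility conditions $$u_0(1)=U(0),\qquad \dot U(0)=u_0'(1)+g(1)u_0(0)+\int_0^1 f(1,y)u_0(y)\,dy,$$ $$\hat u_0(1)=U(0),\qquad \dot U(0)=\hat u_0'(1)+g(1)\hat u_0(0)+\int_0^1 f(1,y)\hat u_0(y)\,dy+p_1(1)\,[u_0(0)-\hat u_0(0)].$$ Then for all $t\ge 0$ and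 all $c>0$, the (classical) solutions satisfy $$\|u[t]-\hat u[t]\|\le M e^{-ct}\|u_0-\hat u_0\|,\qquad M=e^{c}\Big(1+\big(M_f e^{M_f}\big)e^{M_f e^{M_f}}\Big)\big(1+M_f e^{M_f}\big).$$ Moreover, $\hat u(x,t)=u(x,t)$ for all $x\in[0,1]$ and all $t\ge 1$, i.e., the observer error is zero for $t\ge 1$ and remains zero thereafter.
   Context: $\mathbb{R}^+=[0,\infty)$. For a function $u:[0,1]\times\mathbb{R}^+\to\mathbb{R}$, $u[t]$ denotes the profile $x\mapsto u(x,t)$, and $\|\cdot\|$ is the norm of $L^2(0,1)$. The Goursat problem for $k$ has a unique $C^1(\mathcal{T})$ solution under the stated regularity of $f$, $g$. Under the stated compatibility conditions the plant and observer systems have unique classical solutions defined for all $t\ge 0$. *)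

From Stdlib Require Import Reals.
From Coquelicot Require Import Coquelicot.
Open Scope R_scope.

Definition pdx (h : R -> R -> R) (x y : R) : R := Derive (fun x' => h x' y) x.
Definition pdy (h : R -> R -> R) (x y : R) : R := Derive (fun y' => h x y') y.

Definition C1_R (h : R -> R) : Prop :=
  (forall x, ex_derive h x) /\ (forall x, continuous (Derive h) x).

Definition C1_R2 (h : R -> R -> R) : Prop :=
  (forall x y, ex_derive (fun x' => h x' y) x) /\
  (forall x y, ex_derive (fun y' => h x y') y) /\
  (forall x y, continuous (fun p : R * R => h (fst p) (snd p)) (x, y)) /\
  (forall x y, continuous (fun p : R * R => pdx h (fst p) (snd p)) (x, y)) /\
  (forall x y, continuous (fun p : R * R => pdy h (fst p) (snd p)) (x, y)).

(* h is C^1 on the (closed) set I with derivative h' on I: h is the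
   restriction to I of a C^1 function H on R, and h' = H' on I
   (for the closed intervals used below, h' on the boundary is the
   one-sided derivative). *)
Definition C1_on (I : R -> Prop) (h h' : R -> R) : Prop :=
  exists H : R -> R, C1_R H /\ forall x, I x -> H x = h x /\ Derive H x = h' x.

Definition C1_on2 (D : R -> R -> Prop) (h hx hy : R -> R -> R) : Prop :=
  exists H : R -> R -> R, C1_R2 H /\
    forall x y, D x y -> H x y = h x y /\ pdx H x y = hx x y /\ pdy H x y = hy x y.

Definition Tri (x y : R) : Prop := 0 <= y /\ y <= x /\ x <= 1.

Definition I01 (x : R) : Prop := 0 <= x <= 1.
Definition Rplus_set (t : R) : Prop := 0 <= t.

Definition Dom (x t : R) : Prop := 0 <= x <= 1 /\ 0 <= t.

Definition L2norm (h : R -> R) : R := sqrt (RInt (fun x => (h x) ^ 2) 0 1).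

From Stdlib Require Import Reals Lra Lia Factorial.
From Coquelicot Require Import Coquelicot.
Open Scope R_scope.

(* The error [e = u - uh] solves [e_t = e_x + k(x,0) e(0,t) + RInt_0^x f(x,y) e(y,t) dy],
   [e(1,t) = 0], since the gains [g] and [g - k(.,0)] differ by [k(.,0)].  Because [k] solves the
   Goursat problem, the inverse backstepping transform
     [e(x,t) = W(x+t) - RInt_0^x k(x,y) W(y+t) dy],   [W(t) = e(0,t)],
   of the pure transport [W(x+t)] solves the same equation, and a Picard iteration along the
   characteristics [x + t = const] shows that [e] is given by this formula.  At [x = 1] the formula
   and [k(1,.) = 0] give [W = 0] on [[1, oo)], hence [e = 0] for [t >= 1].  For [t < 1], a second
   Picard iteration bounds [|k|] by [B = M_f exp M_f]; the formula at [t = 0] and Gronwall give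
   [||W|| <= (1 + B exp B) ||e[0]||], the formula at [t] gives [||e[t]|| <= (1 + B) ||W||], and
   [exp (c (1 - t)) >= 1] yields the exponential estimate. *)

(* Coquelicot states equalities between values of [RInt] and derivatives in a normed module, with
   its own [plus], [minus], [mult], [zero]; [ring] and [field] only see them once retyped at [R]. *)
Ltac as_R_eq :=
  match goal with |- ?x = ?y => change (@eq R x y) end;
  repeat change (plus ?p ?q) with (p + q); repeat change (minus ?p ?q) with (p - q);
  repeat change (mult ?p ?q) with (p * q); repeat change (opp ?p) with (- p);
  repeat change zero with 0.

Lemma Rabs_minus_le a b : Rabs (a - b) <= Rabs a + Rabs b.
Proof. unfold Rminus; rewrite <- (Rabs_Ropp b); apply Rabs_triang. Qed.

(** * Continuity in one and two variables *)

Definition cont1 (w : R -> R) : Prop := forall x, continuous w x.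

Definition cont2 (h : R -> R -> R) : Prop :=
  forall x y, continuous (fun p : R * R => h (fst p) (snd p)) (x, y).

Lemma cont1_const c : cont1 (fun _ => c).
Proof. intros x; apply continuous_const. Qed.

Lemma cont1_id : cont1 (fun x => x).
Proof. intros x; apply continuous_id. Qed.

Lemma cont1_plus u v : cont1 u -> cont1 v -> cont1 (fun x => u x + v x).
Proof. intros Hu Hv x; apply (continuous_plus u v); auto. Qed.

Lemma cont1_minus u v : cont1 u -> cont1 v -> cont1 (fun x => u x - v x).
Proof. intros Hu Hv x; apply (continuous_minus u v); auto. Qed.

Lemma cont1_mult u v : cont1 u -> cont1 v -> cont1 (fun x => u x * v x).
Proof. intros Hu Hv x; apply (continuous_mult u v); auto. Qed.

Lemma cont1_scal c u : cont1 u -> cont1 (fun x => c * u x).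
Proof. intros Hu; apply (cont1_mult (fun _ => c)); auto using cont1_const. Qed.

Lemma cont1_abs u : cont1 u -> cont1 (fun x => Rabs (u x)).
Proof. intros Hu x; apply (continuous_comp u Rabs); [apply Hu | apply continuous_Rabs]. Qed.

Lemma cont1_pow2 u : cont1 u -> cont1 (fun x => u x ^ 2).
Proof.
  intros Hu x; apply continuous_ext with (fun x => u x * (u x * 1)); [reflexivity|].
  apply (cont1_mult u (fun x => u x * 1)); auto using cont1_mult, cont1_const.
Qed.

Lemma cont1_of_ex_derive w : (forall x, ex_derive w x) -> cont1 w.
Proof. intros H x; apply (ex_derive_continuous (K:=R_AbsRing) (V:=R_NormedModule)); apply H. Qed.

Lemma cont2_const c : cont2 (fun _ _ => c).
Proof. intros x y; apply continuous_const. Qed.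

Lemma cont2_fst : cont2 (fun x _ => x).
Proof. intros x y; apply continuous_fst. Qed.

Lemma cont2_snd : cont2 (fun _ y => y).
Proof. intros x y; apply continuous_snd. Qed.

Lemma cont2_comp h a b : cont2 h -> cont2 a -> cont2 b -> cont2 (fun x y => h (a x y) (b x y)).
Proof.
  intros Hh Ha Hb x y.
  apply (continuous_comp_2 (fun p : R * R => a (fst p) (snd p)) (fun p : R * R => b (fst p) (snd p)) h);
    auto.
Qed.

Lemma cont2_plus a b : cont2 a -> cont2 b -> cont2 (fun x y => a x y + b x y).
Proof.
  intros Ha Hb x y.
  apply (continuous_plus (fun p : R * R => a (fst p) (snd p)) (fun p : R * R => b (fst p) (snd p))); auto.
Qed.

Lemma cont2_minus a b : cont2 a -> cont2 b -> cont2 (fun x y => a x y - b x y).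
Proof.
  intros Ha Hb x y.
  apply (continuous_minus (fun p : R * R => a (fst p) (snd p)) (fun p : R * R => b (fst p) (snd p))); auto.
Qed.

Lemma cont2_mult a b : cont2 a -> cont2 b -> cont2 (fun x y => a x y * b x y).
Proof.
  intros Ha Hb x y.
  apply (continuous_mult (fun p : R * R => a (fst p) (snd p)) (fun p : R * R => b (fst p) (snd p))); auto.
Qed.

Lemma cont2_swap h : cont2 h -> cont2 (fun x y => h y x).
Proof. intros Hh; apply (cont2_comp h); auto using cont2_fst, cont2_snd. Qed.

Lemma cont2_of_cont1_l w : cont1 w -> cont2 (fun x _ => w x).
Proof. intros Hw x y; apply (continuous_comp (fun p : R * R => fst p) w); [apply continuous_fst | apply Hw]. Qed.

Lemma cont2_of_cont1_r w : cont1 w -> cont2 (fun _ y => w y).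
Proof. intros Hw x y; apply (continuous_comp (fun p : R * R => snd p) w); [apply continuous_snd | apply Hw]. Qed.

Lemma cont2_add_const_r c : cont2 (fun _ y => y + c).
Proof. apply cont2_plus; [apply cont2_snd | apply cont2_const]. Qed.

Lemma cont1_comp2 h a b : cont2 h -> cont1 a -> cont1 b -> cont1 (fun x => h (a x) (b x)).
Proof. intros Hh Ha Hb x; apply (continuous_comp_2 a b h); auto. Qed.

Lemma cont1_section_r h x : cont2 h -> cont1 (fun y => h x y).
Proof. intros Hh; apply (cont1_comp2 h); auto using cont1_const, cont1_id. Qed.

Lemma cont1_section_l h y : cont2 h -> cont1 (fun x => h x y).
Proof. intros Hh; apply (cont1_comp2 h); auto using cont1_const, cont1_id. Qed.

Lemma cont1_shift w c : cont1 w -> cont1 (fun x => w (x + c)).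
Proof.
  intros Hw; apply (cont1_comp2 (fun _ y => w y) (fun _ => 0)); auto using cont2_of_cont1_r, cont1_const.
  apply cont1_plus; auto using cont1_id, cont1_const.
Qed.

Lemma cont2_2d_pt h x y : cont2 h -> continuity_2d_pt h x y.
Proof. intros Hh; apply continuity_2d_pt_filterlim, Hh. Qed.

Lemma le_add_INR_of_step_growth (phi : R -> R) a b dl : 0 < dl ->
  (forall x x', a <= x <= b -> a <= x' <= b -> Rabs (x - x') <= dl -> phi x <= phi x' + 1) ->
  forall (n : nat) x, a <= x <= b -> x <= a + INR n * dl -> phi x <= phi a + INR n.
Proof.
  intros Hdl Hstep n; induction n as [|n IH]; intros x Hx Hxn.
  - simpl in Hxn; replace x with a by lra; simpl; lra.
  - rewrite S_INR in *; destruct (Rle_dec x (a + INR n * dl)) as [Hl|Hl].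
    + specialize (IH x Hx Hl); lra.
    + set (x' := Rmax a (x - dl)).
      assert (Hx' : a <= x' <= b) by (split; [apply Rmax_l | apply Rmax_lub; lra]).
      assert (Hx'n : x' <= a + INR n * dl).
      { apply Rmax_lub; [pose proof (pos_INR n); nra | lra]. }
      assert (phi x <= phi x' + 1).
      { apply Hstep; auto; unfold x', Rmax; destruct (Rle_dec a (x - dl)); rewrite Rabs_right; lra. }
      specialize (IH x' Hx' Hx'n); lra.
Qed.

Lemma exists_INR_mult_ge a b dl : 0 < dl -> exists N : nat, b <= a + INR N * dl.
Proof.
  intros Hdl; destruct (Rle_dec b a) as [Hba|Hba].
  - exists 0%nat; simpl; lra.
  - destruct (nfloor_ex ((b - a) / dl)) as [n [_ Hn]]; [apply Rdiv_le_0_compat; lra|].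
    exists (S n); rewrite S_INR.
    assert ((b - a) / dl * dl = b - a) by (field; lra).
    apply (Rmult_lt_compat_r dl) in Hn; auto; lra.
Qed.

(* Uniform continuity lets [|h|] grow by at most 1 per step of size [dl/2], and finitely many steps
   cross the rectangle, first along [x = a], then along each horizontal segment. *)
Lemma cont2_bounded h a b c d : cont2 h ->
  exists S, forall x y, a <= x <= b -> c <= y <= d -> Rabs (h x y) <= S.
Proof.
  intros Hh.
  destruct (uniform_continuity_2d h a b c d) with (eps := mkposreal 1 Rlt_0_1) as [dl Hdl].
  { intros; apply cont2_2d_pt; auto. }
  assert (Hdl2 : 0 < dl / 2) by (destruct dl; simpl; lra).
  assert (Hstep : forall x y u v, a <= x <= b -> c <= y <= d -> a <= u <= b -> c <= v <= d ->
            Rabs (u - x) <= dl / 2 -> Rabs (v - y) <= dl / 2 -> Rabs (h u v) <= Rabs (h x y) + 1).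
  { intros x y u v Hx Hy Hu Hv H1 H2.
    assert (Rabs (h u v - h x y) < 1) by (apply (Hdl x y u v); auto; destruct dl; simpl in *; lra).
    pose proof (Rabs_triang (h u v - h x y) (h x y)).
    replace (h u v - h x y + h x y) with (h u v) in * by ring; lra. }
  destruct (exists_INR_mult_ge a b (dl / 2) Hdl2) as [N1 HN1].
  destruct (exists_INR_mult_ge c d (dl / 2) Hdl2) as [N2 HN2].
  exists (Rabs (h a c) + INR N2 + INR N1); intros x y Hx Hy.
  assert (Hay : Rabs (h a y) <= Rabs (h a c) + INR N2).
  { apply (le_add_INR_of_step_growth (fun y => Rabs (h a y)) c d (dl / 2)); auto; try lra.
    intros y1 y2 Hy1 Hy2 Hclose; apply (Hstep a y2 a y1); auto; try lra.
    rewrite Rminus_eq_0, Rabs_R0; lra. }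
  assert (Hxy : Rabs (h x y) <= Rabs (h a y) + INR N1).
  { apply (le_add_INR_of_step_growth (fun x => Rabs (h x y)) a b (dl / 2)); auto; try lra.
    intros x1 x2 Hx1 Hx2 Hclose; apply (Hstep x2 y x1 y); auto; try lra.
    rewrite Rminus_eq_0, Rabs_R0; lra. }
  lra.
Qed.

Lemma C1_R2_cont H : C1_R2 H -> cont2 H.
Proof. intros [_ [_ [Hc _]]]; exact Hc. Qed.

Lemma C1_R2_cont_pdx H : C1_R2 H -> cont2 (pdx H).
Proof. intros [_ [_ [_ [Hc _]]]]; exact Hc. Qed.

Lemma C1_R2_cont_pdy H : C1_R2 H -> cont2 (pdy H).
Proof. intros [_ [_ [_ [_ Hc]]]]; exact Hc. Qed.

Lemma C1_R2_differentiable H x y : C1_R2 H -> differentiable_pt_lim H x y (pdx H x y) (pdy H x y).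
Proof.
  intros HH; destruct HH as [Hx [Hy [_ [Hcx _]]]].
  apply filterdiff_differentiable_pt_lim.
  eapply filterdiff_ext_lin.
  - apply (is_derive_filterdiff H x y (pdx H) (pdy H x y)).
    + apply filter_forall; intros; apply Derive_correct, Hx.
    + apply Derive_correct, Hy.
    + apply Hcx.
  - intros; reflexivity.
Qed.

Lemma C1_R2_is_derive_line H a b p q s : C1_R2 H ->
  is_derive (fun s => H (a + p * s) (b + q * s)) s
    (pdx H (a + p * s) (b + q * s) * p + pdy H (a + p * s) (b + q * s) * q).
Proof.
  intros HH; apply is_derive_Reals.
  apply (derivable_pt_lim_comp_2d H (fun s => a + p * s) (fun s => b + q * s)).
  - apply C1_R2_differentiable; auto.
  - apply is_derive_Reals; auto_derive; auto; ring.
  - apply is_derive_Reals; auto_derive; auto; ring.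
Qed.

Lemma C1_R2_minus H1 H2 : C1_R2 H1 -> C1_R2 H2 ->
  C1_R2 (fun x y => H1 x y - H2 x y) /\
  (forall x y, pdx (fun x y => H1 x y - H2 x y) x y = pdx H1 x y - pdx H2 x y) /\
  (forall x y, pdy (fun x y => H1 x y - H2 x y) x y = pdy H1 x y - pdy H2 x y).
Proof.
  intros HH1 HH2.
  destruct HH1 as [Hx1 [Hy1 [Hc1 [Hcx1 Hcy1]]]], HH2 as [Hx2 [Hy2 [Hc2 [Hcx2 Hcy2]]]].
  assert (Ex : forall x y, pdx (fun x y => H1 x y - H2 x y) x y = pdx H1 x y - pdx H2 x y).
  { intros; apply Derive_minus; auto. }
  assert (Ey : forall x y, pdy (fun x y => H1 x y - H2 x y) x y = pdy H1 x y - pdy H2 x y).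
  { intros; apply Derive_minus; auto. }
  split; [|split; auto].
  split; [intros; apply (ex_derive_minus (K:=R_AbsRing) (V:=R_NormedModule)); auto|].
  split; [intros; apply (ex_derive_minus (K:=R_AbsRing) (V:=R_NormedModule)); auto|].
  split; [apply cont2_minus; auto|].
  split; intros x y; eapply continuous_ext;
    [intros; symmetry; apply Ex | apply (cont2_minus (pdx H1) (pdx H2)); auto
    |intros; symmetry; apply Ey | apply (cont2_minus (pdy H1) (pdy H2)); auto].
Qed.

(** * Mean value inequalities *)

Lemma is_derive_eq_r (f : R -> R) (x d d' : R) : is_derive f x d -> d = d' -> is_derive f x d'.
Proof. intros H E; subst; auto. Qed.

Lemma eq_of_deriv_zero (phi : R -> R) a b : (forall x, is_derive phi x 0) -> phi a = phi b.
Proof.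
  intros H; destruct (MVT_gen phi a b (fun _ => 0)) as [c [_ E]]; [auto| |lra].
  intros x _; apply continuity_pt_filterlim, (ex_derive_continuous (K:=R_AbsRing) (V:=R_NormedModule)).
  eexists; apply H.
Qed.

Lemma le_of_deriv_nonpos (phi dphi : R -> R) a b : a <= b ->
  (forall x, a <= x <= b -> is_derive phi x (dphi x)) -> (forall x, a <= x <= b -> dphi x <= 0) ->
  phi b <= phi a.
Proof.
  intros Hab Hd Hn; destruct (MVT_gen phi a b dphi) as [c [Hc E]].
  - intros x Hx; rewrite Rmin_left, Rmax_right in Hx by lra; apply Hd; lra.
  - intros x Hx; rewrite Rmin_left, Rmax_right in Hx by lra.
    apply continuity_pt_filterlim, (ex_derive_continuous (K:=R_AbsRing) (V:=R_NormedModule)).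
    eexists; apply Hd; lra.
  - rewrite Rmin_left, Rmax_right in Hc by lra.
    assert (dphi c * (b - a) <= 0) by (apply Rmult_le_0_r; [apply Hn; lra | lra]); lra.
Qed.

Lemma abs_sub_le_of_deriv_bound (phi dphi psi dpsi : R -> R) a b : a <= b ->
  (forall x, a <= x <= b -> is_derive phi x (dphi x)) ->
  (forall x, a <= x <= b -> is_derive psi x (dpsi x)) ->
  (forall x, a <= x <= b -> Rabs (dphi x) <= dpsi x) ->
  Rabs (phi b - phi a) <= psi b - psi a.
Proof.
  intros Hab H1 H2 H3.
  assert (A1 : phi b - psi b <= phi a - psi a).
  { apply (le_of_deriv_nonpos (fun x => phi x - psi x) (fun x => dphi x - dpsi x) a b); auto.
    - intros x Hx; apply (is_derive_minus (K:=R_AbsRing) (V:=R_NormedModule)); auto.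
    - intros x Hx; specialize (H3 x Hx); apply Rabs_le_between in H3; lra. }
  assert (A2 : - phi b - psi b <= - phi a - psi a).
  { apply (le_of_deriv_nonpos (fun x => - phi x - psi x) (fun x => - dphi x - dpsi x) a b); auto.
    - intros x Hx; apply (is_derive_minus (K:=R_AbsRing) (V:=R_NormedModule)); auto.
      apply (is_derive_opp (K:=R_AbsRing) (V:=R_NormedModule)); auto.
    - intros x Hx; specialize (H3 x Hx); apply Rabs_le_between in H3; lra. }
  apply Rabs_le; lra.
Qed.

(** * Riemann integrals of continuous functions *)

Lemma ex_RInt_cont1 w a b : cont1 w -> ex_RInt w a b.
Proof. intros Hw; apply (ex_RInt_continuous (V:=R_CompleteNormedModule)); intros; apply Hw. Qed.

Lemma RInt_Rplus u v a b : ex_RInt u a b -> ex_RInt v a b ->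
  RInt (fun x => u x + v x) a b = RInt u a b + RInt v a b.
Proof. intros; apply (RInt_plus (V:=R_CompleteNormedModule)); auto. Qed.

Lemma RInt_Rminus u v a b : ex_RInt u a b -> ex_RInt v a b ->
  RInt (fun x => u x - v x) a b = RInt u a b - RInt v a b.
Proof. intros; apply (RInt_minus (V:=R_CompleteNormedModule)); auto. Qed.

Lemma RInt_Rscal u c a b : ex_RInt u a b -> RInt (fun x => c * u x) a b = c * RInt u a b.
Proof. intros; apply (RInt_scal (V:=R_CompleteNormedModule)); auto. Qed.

Lemma RInt_Rconst (c a b : R) : RInt (fun _ => c) a b = (b - a) * c.
Proof. apply (RInt_const (V:=R_CompleteNormedModule)). Qed.

Lemma RInt_Rpoint (g : R -> R) a : RInt g a a = 0.
Proof. apply (RInt_point (V:=R_CompleteNormedModule)). Qed.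

Lemma RInt_Rchasles g a b c : cont1 g -> RInt g a b + RInt g b c = RInt g a c.
Proof. intros Hg; apply (RInt_Chasles (V:=R_CompleteNormedModule)); apply ex_RInt_cont1; auto. Qed.

Lemma RInt_ext_all (u v : R -> R) a b : (forall x, u x = v x) -> RInt u a b = RInt v a b.
Proof. intros H; apply RInt_ext; intros; apply H. Qed.

Lemma RInt_ext_on (u v : R -> R) a b : a <= b -> (forall x, a <= x <= b -> u x = v x) -> RInt u a b = RInt v a b.
Proof.
  intros Hab H; apply RInt_ext; intros x Hx.
  rewrite Rmin_left, Rmax_right in Hx by lra; apply H; lra.
Qed.

Lemma RInt_zero_on (g : R -> R) a b : a <= b -> (forall s, a <= s <= b -> g s = 0) -> RInt g a b = 0.
Proof.
  intros Hab H; rewrite (RInt_ext_on g (fun _ => 0) a b Hab H), RInt_Rconst; apply Rmult_0_r.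
Qed.

Lemma RInt_eq_of_zero_after g c : 1 <= c -> cont1 g -> (forall s, 1 <= s -> g s = 0) ->
  RInt g 0 c = RInt g 0 1.
Proof.
  intros Hc Hg H; rewrite <- (RInt_Rchasles g 0 1 c), (RInt_zero_on g 1 c) by (auto; intros; apply H; lra).
  apply Rplus_0_r.
Qed.

Lemma RInt_ge_0_cont u a b : a <= b -> cont1 u -> (forall x, a <= x <= b -> 0 <= u x) ->
  0 <= RInt u a b.
Proof. intros Hab Hu H; apply RInt_ge_0; auto using ex_RInt_cont1; intros; apply H; lra. Qed.

Lemma RInt_le_cont u v a b : a <= b -> cont1 u -> cont1 v ->
  (forall x, a <= x <= b -> u x <= v x) -> RInt u a b <= RInt v a b.
Proof. intros Hab Hu Hv H; apply RInt_le; auto using ex_RInt_cont1; intros; apply H; lra. Qed.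

Lemma abs_RInt_le_cont g a b : a <= b -> cont1 g ->
  Rabs (RInt g a b) <= RInt (fun t => Rabs (g t)) a b.
Proof. intros; apply abs_RInt_le; auto using ex_RInt_cont1. Qed.

Lemma RInt_le_RInt_wider b x y z w : z <= x -> x <= y -> y <= w -> cont1 b ->
  (forall s, z <= s <= w -> 0 <= b s) -> RInt b x y <= RInt b z w.
Proof.
  intros H1 H2 H3 Hb Hp.
  rewrite <- (RInt_Rchasles b z x w), <- (RInt_Rchasles b x y w) by auto.
  assert (0 <= RInt b z x) by (apply RInt_ge_0_cont; auto; intros; apply Hp; lra).
  assert (0 <= RInt b y w) by (apply RInt_ge_0_cont; auto; intros; apply Hp; lra).
  lra.
Qed.

Lemma RInt_abs_le_const g c u K : ex_RInt g c u ->
  (forall t, Rmin c u <= t <= Rmax c u -> Rabs (g t) <= K) -> Rabs (RInt g c u) <= Rabs (u - c) * K.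
Proof.
  intros Hex Hb; destruct (Rle_dec c u) as [Hcu|Hcu].
  - rewrite (Rabs_right (u - c)) by lra.
    apply (norm_RInt_le_const (V:=R_NormedModule) g c u (RInt g c u) K Hcu).
    + intros t Ht; apply Hb; rewrite Rmin_left, Rmax_right; lra.
    + apply (RInt_correct (V:=R_CompleteNormedModule)); auto.
  - rewrite <- opp_RInt_swap by (apply ex_RInt_swap; auto).
    change (opp (RInt g u c)) with (- RInt g u c).
    rewrite Rabs_Ropp, (Rabs_left1 (u - c)) by lra; replace (- (u - c)) with (c - u) by ring.
    apply (norm_RInt_le_const (V:=R_NormedModule) g u c (RInt g u c) K); [lra| |].
    + intros t Ht; apply Hb; rewrite Rmin_right, Rmax_left; lra.
    + apply (RInt_correct (V:=R_CompleteNormedModule)), ex_RInt_swap; auto.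
Qed.

Lemma RInt_shift w c a b : cont1 w -> RInt (fun y => w (y + c)) a b = RInt w (a + c) (b + c).
Proof.
  intros Hw; assert (H := RInt_comp_lin (V:=R_CompleteNormedModule) w 1 c a b).
  rewrite !Rmult_1_l in H; rewrite <- H by (apply ex_RInt_cont1; auto).
  apply RInt_ext; intros x _; change (scal 1 (w (1 * x + c))) with (1 * w (1 * x + c)).
  rewrite !Rmult_1_l; reflexivity.
Qed.

Lemma is_derive_RInt_upper g a x : cont1 g -> is_derive (fun z => RInt g a z) x (g x).
Proof.
  intros Hg; apply (is_derive_RInt (V:=R_NormedModule) g (fun z => RInt g a z) a x).
  - apply filter_forall; intros; apply (RInt_correct (V:=R_CompleteNormedModule)), ex_RInt_cont1; auto.
  - apply Hg.
Qed.

Lemma cont2_RInt_upper h c : cont2 h -> cont2 (fun x u => RInt (h x) c u).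
Proof.
  intros Hh x0 u0; apply filterlim_locally; intros eps.
  set (L := Rabs (u0 - c) + 1).
  assert (HL : 0 < L) by (unfold L; pose proof (Rabs_pos (u0 - c)); lra).
  assert (He1 : 0 < eps / 2 / L) by (apply Rdiv_lt_0_compat; [destruct eps; simpl; lra | auto]).
  destruct (uniform_continuity_2d h (x0 - 1) (x0 + 1) (Rmin c u0 - 1) (Rmax c u0 + 1))
    with (eps := mkposreal _ He1) as [d1 Hd1]; [intros; apply cont2_2d_pt; auto|].
  assert (He2 : 0 < eps / 2) by (destruct eps; simpl; lra).
  assert (Hcu : continuity_pt (fun u => RInt (h x0) c u) u0).
  { apply continuity_pt_filterlim, (ex_derive_continuous (K:=R_AbsRing) (V:=R_NormedModule)).
    eexists; apply is_derive_RInt_upper, cont1_section_r; auto. }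
  destruct (proj1 (continuity_pt_locally _ u0) Hcu (mkposreal _ He2)) as [d2 Hd2].
  assert (Hd : 0 < Rmin 1 (Rmin d1 d2)) by (apply Rmin_pos; [lra | apply Rmin_pos; apply cond_pos]).
  apply (proj1 (locally_2d_locally (fun x u => ball (RInt (h x0) c u0) eps (RInt (h x) c u)) x0 u0)).
  exists (mkposreal _ Hd); simpl; intros x u Hx Hu.
  pose proof (Rmin_l 1 (Rmin d1 d2)); pose proof (Rmin_r 1 (Rmin d1 d2)).
  pose proof (Rmin_l d1 d2); pose proof (Rmin_r d1 d2).
  change (Rabs (RInt (h x) c u - RInt (h x0) c u0) < eps).
  assert (Hex : forall y a b, ex_RInt (h y) a b) by (intros; apply ex_RInt_cont1, cont1_section_r; auto).
  replace (RInt (h x) c u - RInt (h x0) c u0) with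
    (RInt (fun t => h x t - h x0 t) c u + (RInt (h x0) c u - RInt (h x0) c u0))
    by (rewrite RInt_Rminus; auto; ring).
  eapply Rle_lt_trans; [apply Rabs_triang|].
  replace (pos eps) with (eps / 2 + eps / 2) by field.
  apply Rplus_le_lt_compat; [| apply Hd2; change (Rabs (u - u0) < d2); lra].
  eapply Rle_trans; [apply RInt_abs_le_const with (K := eps / 2 / L)|].
  - apply (ex_RInt_minus (V:=R_NormedModule)); auto.
  - intros t Ht; apply Rlt_le.
    assert (Hxt : Rabs (x - x0) < 1) by lra; apply Rabs_def2 in Hxt.
    assert (Hut : Rabs (u - u0) < 1) by lra; apply Rabs_def2 in Hut.
    apply (Hd1 x0 t x t); try lra.
    + revert Ht; unfold Rmin, Rmax; destruct (Rle_dec c u), (Rle_dec c u0); lra.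
    + revert Ht; unfold Rmin, Rmax; destruct (Rle_dec c u), (Rle_dec c u0); lra.
    + rewrite Rminus_eq_0, Rabs_R0; apply cond_pos.
  - unfold L; replace (eps / 2) with (eps / 2 / L * L) at 2 by (field; lra).
    rewrite Rmult_comm; apply Rmult_le_compat_l; [lra|].
    pose proof (Rabs_triang (u - u0) (u0 - c)); replace (u - u0 + (u0 - c)) with (u - c) in * by ring.
    unfold L; lra.
Qed.

Lemma cont2_RInt h a b : cont2 h -> cont2 a -> cont2 b ->
  cont2 (fun x y => RInt (h x) (a x y) (b x y)).
Proof.
  intros Hh Ha Hb x y.
  apply continuous_ext with
    (fun p : R * R => RInt (h (fst p)) 0 (b (fst p) (snd p)) - RInt (h (fst p)) 0 (a (fst p) (snd p))).
  { intros [p1 p2]; simpl.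
    rewrite <- (RInt_Rchasles (h p1) 0 (a p1 p2) (b p1 p2)) by (apply cont1_section_r; auto); ring. }
  apply (cont2_minus (fun x y => RInt (h x) 0 (b x y)) (fun x y => RInt (h x) 0 (a x y)));
    apply (cont2_comp (fun x u => RInt (h x) 0 u)); auto using cont2_fst, cont2_RInt_upper.
Qed.

Lemma cont1_RInt_param h a b : cont2 h -> cont1 a -> cont1 b -> cont1 (fun x => RInt (h x) (a x) (b x)).
Proof.
  intros Hh Ha Hb.
  apply (cont1_section_l (fun x _ => RInt (h x) (a x) (b x)) 0).
  apply (cont2_RInt h (fun x _ => a x) (fun x _ => b x)); auto using cont2_of_cont1_l.
Qed.

Lemma is_derive_RInt_param_bounds (h dh : R -> R -> R) (a b : R -> R) x da db :
  (forall u t, is_derive (fun z => h z t) u (dh u t)) -> cont2 dh -> cont2 h ->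
  is_derive a x da -> is_derive b x db ->
  is_derive (fun x => RInt (fun t => h x t) (a x) (b x)) x
    (RInt (fun t => dh x t) (a x) (b x) - h x (a x) * da + h x (b x) * db).
Proof.
  intros Hd Cdh Ch Ha Hb.
  assert (E : forall u t, Derive (fun z => h z t) u = dh u t) by (intros; apply is_derive_unique; auto).
  assert (Hex : forall y c d, ex_RInt (fun t => h y t) c d) by (intros; apply ex_RInt_cont1, cont1_section_r; auto).
  assert (Hc : forall u v, continuity_2d_pt (fun u v => Derive (fun z => h z v) u) u v).
  { intros u v; apply continuity_2d_pt_ext with dh; [intros; rewrite E; auto | apply cont2_2d_pt; auto]. }
  replace (RInt (fun t => dh x t) (a x) (b x) - h x (a x) * da + h x (b x) * db)
    with (RInt (fun t => Derive (fun u => h u t) x) (a x) (b x) + - h x (a x) * da + h x (b x) * db)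
    by (rewrite (RInt_ext _ (fun t => dh x t)); [ring | intros; apply E]).
  apply is_derive_RInt_param_bound_comp; auto.
  - apply filter_forall; intros; apply Hex.
  - exists (mkposreal 1 Rlt_0_1); apply filter_forall; intros; apply Hex.
  - exists (mkposreal 1 Rlt_0_1); apply filter_forall; intros; apply Hex.
  - exists (mkposreal 1 Rlt_0_1); apply filter_forall; intros; eexists; apply Hd.
  - exists (mkposreal 1 Rlt_0_1); intros; apply Hc.
  - exists (mkposreal 1 Rlt_0_1); intros; apply Hc.
  - apply continuity_pt_filterlim, (cont1_section_r h x Ch).
  - apply continuity_pt_filterlim, (cont1_section_r h x Ch).
Qed.

(* Both sides have derivative [y |-> RInt (fun eta => h eta y) 0 y] in [X] and vanish at [X = 0]. *)
Lemma RInt_triangle_swap h X : cont2 h ->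
  RInt (fun y => RInt (fun eta => h eta y) y X) 0 X = RInt (fun eta => RInt (fun y => h eta y) 0 eta) 0 X.
Proof.
  intros Hh.
  assert (HD : forall Y, is_derive (fun X => RInt (fun y => RInt (fun eta => h eta y) y X) 0 X
                                      - RInt (fun eta => RInt (fun y => h eta y) 0 eta) 0 X) Y 0).
  { intros Y.
    assert (D1 : is_derive (fun X => RInt (fun y => RInt (fun eta => h eta y) y X) 0 X) Y
                   (RInt (fun t => h Y t) 0 Y)).
    { eapply is_derive_eq_r.
      - apply (is_derive_RInt_param_bounds (fun X y => RInt (fun eta => h eta y) y X) (fun X y => h X y)
                 (fun _ => 0) (fun X => X) Y 0 1).
        + intros u t; apply (is_derive_RInt_upper (fun eta => h eta t)), cont1_section_l; auto.
        + exact Hh.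
        + apply cont2_swap, (cont2_RInt (fun y eta => h eta y)); auto using cont2_fst, cont2_snd, cont2_swap.
        + apply (is_derive_const (K:=R_AbsRing) (V:=R_NormedModule)).
        + apply (is_derive_id (K:=R_AbsRing)).
      - rewrite RInt_Rpoint; ring. }
    assert (D2 : is_derive (fun X => RInt (fun eta => RInt (fun y => h eta y) 0 eta) 0 X) Y
                   (RInt (fun t => h Y t) 0 Y)).
    { apply (is_derive_RInt_upper (fun eta => RInt (fun y => h eta y) 0 eta)).
      apply (cont1_RInt_param h (fun _ => 0) (fun x => x)); auto using cont1_const, cont1_id. }
    pose proof (is_derive_minus (K:=R_AbsRing) (V:=R_NormedModule) _ _ _ _ _ D1 D2) as D.
    rewrite minus_eq_zero in D; exact D. }
  pose proof (eq_of_deriv_zero _ X 0 HD) as E; simpl in E; rewrite !RInt_Rpoint in E; lra.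
Qed.

Lemma exp_le_exp_of_le x y : x <= y -> exp x <= exp y.
Proof. intros [H|H]; [left; apply exp_increasing; auto | subst; lra]. Qed.

(* [Psi] below is nonincreasing. *)
Lemma gronwall_le a b B : cont1 a -> cont1 b -> 0 <= B ->
  (forall x, 0 <= x <= 1 -> 0 <= b x) ->
  (forall x, 0 <= x <= 1 -> a x <= b x + B * RInt a 0 x) ->
  forall x, 0 <= x <= 1 -> a x <= b x + B * exp B * RInt b 0 1.
Proof.
  intros Ca Cb HB Hb Ha x Hx.
  assert (Ce : cont1 (fun z => exp (- B * z))) by (apply cont1_of_ex_derive; intros; auto_derive; auto).
  set (Psi := fun x => exp (- B * x) * RInt a 0 x - RInt (fun z => exp (- B * z) * b z) 0 x).
  assert (HPsi : Psi x <= Psi 0).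
  { apply (le_of_deriv_nonpos Psi (fun x => exp (- B * x) * (a x - b x - B * RInt a 0 x)) 0 x); try lra.
    - intros y _; eapply is_derive_eq_r.
      + apply (is_derive_minus (K:=R_AbsRing) (V:=R_NormedModule)).
        * apply (is_derive_mult (K:=R_AbsRing) (fun x => exp (- B * x)) (fun x => RInt a 0 x));
            [auto_derive; auto | apply is_derive_RInt_upper; auto | intros; apply Rmult_comm].
        * apply (is_derive_RInt_upper (fun z => exp (- B * z) * b z)), cont1_mult; auto.
      + simpl; as_R_eq; ring.
    - intros y Hy; specialize (Ha y ltac:(lra)); pose proof (exp_pos (- B * y)); nra. }
  unfold Psi in HPsi; rewrite !RInt_Rpoint, Rmult_0_r in HPsi.
  assert (H1 : RInt (fun z => exp (- B * z) * b z) 0 x <= RInt b 0 1).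
  { apply Rle_trans with (RInt b 0 x); [| apply RInt_le_RInt_wider; auto; lra].
    apply RInt_le_cont; auto using cont1_mult; try lra.
    intros z Hz; assert (exp (- B * z) <= 1) by (rewrite <- exp_0; apply exp_le_exp_of_le; nra).
    specialize (Hb z ltac:(lra)); nra. }
  assert (H2 : RInt a 0 x <= exp B * RInt b 0 1).
  { assert (E : exp (B * x) * exp (- B * x) = 1) by (rewrite <- exp_plus, <- exp_0; f_equal; ring).
    assert (exp (B * x) <= exp B) by (apply exp_le_exp_of_le; nra).
    assert (0 <= RInt b 0 1) by (apply RInt_ge_0_cont; auto; lra).
    pose proof (exp_pos (B * x)).
    replace (RInt a 0 x) with (exp (B * x) * (exp (- B * x) * RInt a 0 x)) by (rewrite <- Rmult_assoc, E; ring).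
    apply Rle_trans with (exp (B * x) * RInt b 0 1); [apply Rmult_le_compat_l|apply Rmult_le_compat_r]; lra. }
  specialize (Ha x Hx); nra.
Qed.

(** * The L2 norm on [0,1] *)

Lemma RInt_quadratic_expand u v p q r a b : cont1 u -> cont1 v ->
  RInt (fun x => p * u x ^ 2 + q * (u x * v x) + r * v x ^ 2) a b
  = p * RInt (fun x => u x ^ 2) a b + q * RInt (fun x => u x * v x) a b + r * RInt (fun x => v x ^ 2) a b.
Proof.
  intros Hu Hv.
  assert (C1 : cont1 (fun x => p * u x ^ 2)) by (apply cont1_scal, cont1_pow2; auto).
  assert (C2 : cont1 (fun x => q * (u x * v x))) by (apply cont1_scal, cont1_mult; auto).
  assert (C3 : cont1 (fun x => r * v x ^ 2)) by (apply cont1_scal, cont1_pow2; auto).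
  rewrite RInt_Rplus, RInt_Rplus by (apply ex_RInt_cont1; auto using cont1_plus).
  rewrite !RInt_Rscal by (apply ex_RInt_cont1; auto using cont1_pow2, cont1_mult).
  reflexivity.
Qed.

Lemma RInt_Cauchy_Schwarz u v a b : a <= b -> cont1 u -> cont1 v ->
  RInt (fun x => u x * v x) a b ^ 2 <= RInt (fun x => u x ^ 2) a b * RInt (fun x => v x ^ 2) a b.
Proof.
  intros Hab Hu Hv.
  set (A := RInt (fun x => u x ^ 2) a b); set (B := RInt (fun x => v x ^ 2) a b).
  set (C := RInt (fun x => u x * v x) a b).
  assert (Hq : forall l, 0 <= A - 2 * l * C + l ^ 2 * B).
  { intros l.
    replace (A - 2 * l * C + l ^ 2 * B) with (RInt (fun x => (u x - l * v x) ^ 2) a b).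
    - apply RInt_ge_0_cont; auto using cont1_pow2, cont1_minus, cont1_scal; intros; apply pow2_ge_0.
    - rewrite (RInt_ext_all (fun x => (u x - l * v x) ^ 2)
                 (fun x => 1 * u x ^ 2 + (- 2 * l) * (u x * v x) + l ^ 2 * v x ^ 2)) by (intros; ring).
      rewrite RInt_quadratic_expand by auto; unfold A, B, C; as_R_eq; ring. }
  assert (HB : 0 <= B) by (apply RInt_ge_0_cont; auto using cont1_pow2; intros; apply pow2_ge_0).
  destruct (Rle_lt_or_eq_dec 0 B HB) as [HBp|HB0].
  - specialize (Hq (C / B)).
    replace (A - 2 * (C / B) * C + (C / B) ^ 2 * B) with ((A * B - C ^ 2) / B) in Hq by (field; lra).
    assert (0 <= A * B - C ^ 2); [|lra].
    apply Rmult_le_reg_r with (/ B); [apply Rinv_0_lt_compat; auto | rewrite Rmult_0_l; apply Hq].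
  - rewrite <- HB0 in Hq |- *; destruct (Req_dec C 0) as [HC|HC]; [rewrite HC; lra|].
    specialize (Hq ((A + 1) / (2 * C))).
    replace (A - 2 * ((A + 1) / (2 * C)) * C + ((A + 1) / (2 * C)) ^ 2 * 0) with (-1) in Hq
      by (field; auto).
    lra.
Qed.

Lemma L2norm_ge_0 h : 0 <= L2norm h.
Proof. apply sqrt_pos. Qed.

Lemma L2norm_ext_on u v : (forall x, 0 <= x <= 1 -> u x = v x) -> L2norm u = L2norm v.
Proof. intros H; unfold L2norm; f_equal; apply RInt_ext_on; [lra | intros x Hx; rewrite H; auto]. Qed.

Lemma L2norm_abs h : L2norm (fun x => Rabs (h x)) = L2norm h.
Proof. unfold L2norm; f_equal; apply RInt_ext; intros; apply pow2_abs. Qed.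

Lemma L2norm_const c : 0 <= c -> L2norm (fun _ => c) = c.
Proof. intros Hc; unfold L2norm; rewrite RInt_Rconst, Rminus_0_r, Rmult_1_l; apply sqrt_pow2; auto. Qed.

Lemma L2norm_zero_on h : (forall x, 0 <= x <= 1 -> h x = 0) -> L2norm h = 0.
Proof.
  intros H; unfold L2norm; rewrite (RInt_zero_on (fun x => h x ^ 2)); [apply sqrt_0 | lra |].
  intros x Hx; rewrite H; auto; ring.
Qed.

Lemma L2norm_plus_le u v : cont1 u -> cont1 v -> L2norm (fun x => u x + v x) <= L2norm u + L2norm v.
Proof.
  intros Hu Hv; unfold L2norm.
  set (A := RInt (fun x => u x ^ 2) 0 1); set (B := RInt (fun x => v x ^ 2) 0 1).
  set (C := RInt (fun x => u x * v x) 0 1).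
  assert (HA : 0 <= A) by (apply RInt_ge_0_cont; auto using cont1_pow2; intros; lra || apply pow2_ge_0).
  assert (HB : 0 <= B) by (apply RInt_ge_0_cont; auto using cont1_pow2; intros; lra || apply pow2_ge_0).
  assert (E : RInt (fun x => (u x + v x) ^ 2) 0 1 = A + 2 * C + B).
  { rewrite (RInt_ext_all (fun x => (u x + v x) ^ 2) (fun x => 1 * u x ^ 2 + 2 * (u x * v x) + 1 * v x ^ 2))
      by (intros; ring).
    rewrite RInt_quadratic_expand by auto; unfold A, B, C; as_R_eq; ring. }
  assert (HC : C <= sqrt A * sqrt B).
  { pose proof (RInt_Cauchy_Schwarz u v 0 1 ltac:(lra) Hu Hv) as H; fold A B C in H.
    rewrite <- sqrt_mult by auto; destruct (Rle_dec C 0); [apply Rle_trans with 0; auto; apply sqrt_pos|].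
    rewrite <- (sqrt_pow2 C) by lra; apply sqrt_le_1_alt; lra. }
  rewrite E, <- (sqrt_pow2 (sqrt A + sqrt B)) by (pose proof (sqrt_pos A); pose proof (sqrt_pos B); lra).
  apply sqrt_le_1_alt.
  replace ((sqrt A + sqrt B) ^ 2) with (sqrt A * sqrt A + 2 * (sqrt A * sqrt B) + sqrt B * sqrt B) by ring.
  rewrite !sqrt_sqrt by auto; lra.
Qed.

Lemma L2norm_le_of_abs_le u v : cont1 u -> cont1 v ->
  (forall x, 0 <= x <= 1 -> Rabs (u x) <= v x) -> L2norm u <= L2norm v.
Proof.
  intros Hu Hv H; apply sqrt_le_1_alt, RInt_le_cont; auto using cont1_pow2; try lra.
  intros x Hx; specialize (H x Hx); rewrite <- (pow2_abs (u x)); pose proof (Rabs_pos (u x)); nra.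
Qed.

Lemma RInt_abs_le_L2norm h : cont1 h -> RInt (fun x => Rabs (h x)) 0 1 <= L2norm h.
Proof.
  intros Hh; unfold L2norm.
  pose proof (RInt_Cauchy_Schwarz (fun x => Rabs (h x)) (fun _ => 1) 0 1 ltac:(lra) (cont1_abs h Hh)
    (cont1_const 1)) as H.
  rewrite (RInt_ext_all (fun x => Rabs (h x) * 1) (fun x => Rabs (h x))) in H by (intros; ring).
  rewrite (RInt_ext_all (fun x => Rabs (h x) ^ 2) (fun x => h x ^ 2)) in H by (intros; apply pow2_abs).
  rewrite RInt_Rconst in H; replace ((1 - 0) * 1 ^ 2) with 1 in H by ring; rewrite Rmult_1_r in H.
  rewrite <- (sqrt_pow2 (RInt (fun x => Rabs (h x)) 0 1)); [apply sqrt_le_1_alt; auto|].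
  apply RInt_ge_0_cont; auto using cont1_abs; intros; [lra | apply Rabs_pos].
Qed.

Lemma L2norm_shift_le w t : cont1 w -> 0 <= t -> (forall s, 1 <= s -> w s = 0) ->
  L2norm (fun x => w (x + t)) <= L2norm w.
Proof.
  intros Hw Ht H0; apply sqrt_le_1_alt.
  rewrite (RInt_shift (fun z => w z ^ 2)), Rplus_0_l by (apply cont1_pow2; auto).
  rewrite <- (RInt_eq_of_zero_after (fun z => w z ^ 2) (1 + t + 1)); auto using cont1_pow2; try lra.
  - apply RInt_le_RInt_wider; auto using cont1_pow2; try lra; intros; apply pow2_ge_0.
  - intros s Hs; rewrite H0; auto; ring.
Qed.

(** * The backstepping kernel and the observer error *)

Lemma C1_R2_is_derive_diag H (c u : R) : C1_R2 H ->
  is_derive (fun v => H v (c + v)) u (pdx H u (c + u) + pdy H u (c + u)).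
Proof.
  intros HH; pose proof (C1_R2_is_derive_line H 0 c 1 1 u HH) as D.
  eapply is_derive_ext; [|eapply is_derive_eq_r; [exact D|]].
  - intros v; simpl; rewrite Rplus_0_l, Rmult_1_l; reflexivity.
  - rewrite Rplus_0_l, Rmult_1_l; ring.
Qed.

Lemma C1_R2_is_derive_antidiag H (s u : R) : C1_R2 H ->
  is_derive (fun v => H v (s - v)) u (pdx H u (s - u) - pdy H u (s - u)).
Proof.
  intros HH; pose proof (C1_R2_is_derive_line H 0 s 1 (-1) u HH) as D.
  eapply is_derive_ext; [|eapply is_derive_eq_r; [exact D|]].
  - intros v; simpl; rewrite Rplus_0_l, Rmult_1_l; f_equal; ring.
  - replace (0 + 1 * u) with u by ring; replace (s + -1 * u) with (s - u) by ring; ring.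
Qed.

(* The inverse backstepping transform of the transport solution [(x, t) |-> W (x + t)]. *)
Definition error_repr (K : R -> R -> R) (W : R -> R) (x t : R) : R :=
  W (x + t) - RInt (fun y => K x y * W (y + t)) 0 x.

Lemma RInt_shift_kernel K W x t : cont2 K -> cont1 W ->
  RInt (fun y => K x y * W (y + t)) 0 x = RInt (fun z => K x (z - t) * W z) t (x + t).
Proof.
  intros HK HW.
  rewrite (RInt_ext_all (fun y => K x y * W (y + t)) (fun y => K x (y + t - t) * W (y + t)))
    by (intros y; do 3 f_equal; ring).
  rewrite (RInt_shift (fun z => K x (z - t) * W z)), Rplus_0_l; auto.
  apply cont1_mult; auto; apply (cont1_comp2 K (fun _ => x)); auto using cont1_const.
  apply cont1_minus; auto using cont1_id, cont1_const.
Qed.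

Lemma cont1_error_repr K W t : cont2 K -> cont1 W -> cont1 (fun x => error_repr K W x t).
Proof.
  intros HK HW; apply cont1_minus; [apply cont1_shift; auto|].
  apply (cont1_RInt_param (fun x y => K x y * W (y + t)) (fun _ => 0) (fun x => x));
    auto using cont1_const, cont1_id.
  apply cont2_mult; auto; apply (cont2_comp (fun _ y => W y) (fun x _ => x) (fun _ y => y + t));
    auto using cont2_of_cont1_r, cont2_fst, cont2_add_const_r.
Qed.

Lemma error_repr_bounded K W L : cont2 K -> cont1 W ->
  exists S, forall x t, 0 <= x <= 1 -> 0 <= t <= L -> Rabs (error_repr K W x t) <= S.
Proof.
  intros HK HW.
  destruct (cont2_bounded K 0 1 0 1 HK) as [SK HSK].
  destruct (cont2_bounded (fun _ z => W z) 0 0 0 (L + 1) (cont2_of_cont1_r W HW)) as [SW HSW].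
  exists (SW + SK * SW); intros x t Hx Ht.
  assert (HW0 : 0 <= SW) by (eapply Rle_trans; [apply Rabs_pos | apply (HSW 0 0)]; lra).
  assert (HK0 : 0 <= SK) by (eapply Rle_trans; [apply Rabs_pos | apply (HSK 0 0)]; lra).
  assert (Hint : Rabs (RInt (fun y => K x y * W (y + t)) 0 x) <= Rabs (x - 0) * (SK * SW)).
  { apply RInt_abs_le_const.
    - apply ex_RInt_cont1, cont1_mult; [apply cont1_section_r; auto | apply cont1_shift; auto].
    - intros y Hy; rewrite Rmin_left, Rmax_right in Hy by lra; rewrite Rabs_mult.
      apply Rmult_le_compat; try apply Rabs_pos; [apply HSK | apply (HSW 0)]; lra. }
  rewrite Rminus_0_r, (Rabs_right x) in Hint by lra.
  pose proof (Rabs_minus_le (W (x + t)) (RInt (fun y => K x y * W (y + t)) 0 x)).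
  assert (Rabs (W (x + t)) <= SW) by (apply (HSW 0); lra).
  assert (x * (SK * SW) <= SK * SW) by (pose proof (Rmult_le_pos SK SW HK0 HW0); nra).
  unfold error_repr; lra.
Qed.

Lemma error_repr_eq_0 K W x t : 0 <= x -> 1 <= t -> (forall s, 1 <= s -> W s = 0) ->
  error_repr K W x t = 0.
Proof.
  intros Hx Ht HW; unfold error_repr; rewrite HW by lra.
  rewrite (RInt_zero_on (fun y => K x y * W (y + t))); [ring | lra |].
  intros y Hy; rewrite HW by lra; ring.
Qed.

Lemma le_of_le_add_pow_div_fact z A S c : 0 <= S ->
  (forall n, z <= A + S * (c ^ n / INR (fact n))) -> z <= A.
Proof.
  intros HS H; destruct (Rle_dec z A) as [|Hz]; auto; exfalso.
  assert (He : 0 < (z - A) / (S + 1)) by (apply Rdiv_lt_0_compat; lra).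
  destruct (cv_speed_pow_fact c _ He) as [N HN].
  specialize (HN N (Nat.le_refl N)); unfold Rdist in HN; rewrite Rminus_0_r in HN.
  specialize (H N); apply Rabs_def2 in HN; destruct HN as [HN _].
  assert (S * (c ^ N / INR (fact N)) <= S * ((z - A) / (S + 1))) by (apply Rmult_le_compat_l; lra).
  assert (S * ((z - A) / (S + 1)) < z - A).
  { apply Rmult_lt_reg_r with (S + 1); [lra|]; field_simplify; [nra | lra]. }
  lra.
Qed.

Lemma is_derive_pow_div_fact (m c : R) n x :
  is_derive (fun e => m * ((c * e) ^ S n / INR (fact (S n)))) x (m * (c * ((c * x) ^ n / INR (fact n)))).
Proof.
  auto_derive; auto.
  change (match n with 0%nat => 1 | S _ => INR n + 1 end) with (INR (S n)).
  rewrite plus_INR, mult_INR, S_INR.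
  assert (INR (fact n) <> 0) by apply INR_fact_neq_0.
  assert (0 <= INR n) by apply pos_INR.
  replace (INR (fact n) + INR n * INR (fact n)) with ((INR n + 1) * INR (fact n)) by ring.
  field; split; auto; lra.
Qed.

(* [Mf exp (Mf d)] is the fixed point of the Picard map of the kernel equation along a diagonal of
   length [d]; the second term is what [n] iterations leave of an a priori bound [M0]. *)
Definition picard_majorant (Mf M0 : R) (n : nat) (d : R) : R :=
  Mf * exp (Mf * d) + M0 * ((Mf * d) ^ n / INR (fact n)).

Lemma is_derive_picard_majorant Mf M0 n b e :
  is_derive (fun e => picard_majorant Mf M0 (S n) (e - b)) e (Mf * picard_majorant Mf M0 n (e - b)).
Proof.
  unfold picard_majorant; auto_derive; auto.
  change (match n with 0%nat => 1 | S _ => INR n + 1 end) with (INR (S n)).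
  rewrite plus_INR, mult_INR, S_INR.
  assert (INR (fact n) <> 0) by apply INR_fact_neq_0.
  assert (0 <= INR n) by apply pos_INR.
  replace (INR (fact n) + INR n * INR (fact n)) with ((INR n + 1) * INR (fact n)) by ring.
  unfold Rminus; as_R_eq; field; split; auto; lra.
Qed.

Lemma picard_majorant_ge_0 Mf M0 n d : 0 <= Mf -> 0 <= M0 -> 0 <= d -> 0 <= picard_majorant Mf M0 n d.
Proof.
  intros HM HS Hd; unfold picard_majorant.
  pose proof (exp_pos (Mf * d)); pose proof (lt_0_INR _ (lt_O_fact n)).
  assert (0 <= (Mf * d) ^ n) by (apply pow_le; nra).
  assert (0 <= (Mf * d) ^ n / INR (fact n)) by (apply Rdiv_le_0_compat; lra).
  nra.
Qed.

Section ObserverError.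

Variables (F K : R -> R -> R) (Mf : R).
Hypothesis F_cont : cont2 F.
Hypothesis K_C1 : C1_R2 K.
Hypothesis Mf_ge_0 : 0 <= Mf.
Hypothesis F_bound : forall x y, Tri x y -> Rabs (F x y) <= Mf.
Hypothesis K_goursat : forall x y, Tri x y ->
  pdy K x y + pdx K x y = F x y - RInt (fun eta => F x eta * K eta y) y x.
Hypothesis K_bc : forall y, I01 y -> K 1 y = 0.

Lemma goursat_rhs_bound M0 n : 0 <= M0 ->
  (forall x y, Tri x y -> Rabs (K x y) <= picard_majorant Mf M0 n (x - y)) ->
  forall a b, Tri a b ->
  Rabs (F a b - RInt (fun eta => F a eta * K eta b) b a) <= picard_majorant Mf M0 (S n) (a - b).
Proof.
  intros HS IH a b [Hb [Hba Ha]].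
  set (bnd := fun e => Mf * picard_majorant Mf M0 n (e - b)).
  assert (Cb : cont1 bnd) by (apply cont1_of_ex_derive; intros; unfold bnd, picard_majorant; auto_derive; auto).
  assert (Cg : cont1 (fun eta => F a eta * K eta b)).
  { apply cont1_mult; [apply cont1_section_r | apply cont1_section_l]; auto using C1_R2_cont. }
  assert (HI : RInt bnd b a = picard_majorant Mf M0 (S n) (a - b) - Mf).
  { rewrite (is_RInt_unique (V:=R_CompleteNormedModule) bnd b a
      (picard_majorant Mf M0 (S n) (a - b) - picard_majorant Mf M0 (S n) (b - b))).
    - unfold picard_majorant; rewrite Rminus_eq_0, Rmult_0_r, exp_0, pow_i by lia; unfold Rdiv; as_R_eq; ring.
    - apply (is_RInt_derive (V:=R_CompleteNormedModule) (fun e => picard_majorant Mf M0 (S n) (e - b)));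
        intros; [apply is_derive_picard_majorant | apply Cb]. }
  assert (HIa : Rabs (RInt (fun eta => F a eta * K eta b) b a) <= RInt bnd b a).
  { eapply Rle_trans; [apply abs_RInt_le_cont; auto|].
    apply RInt_le_cont; auto using cont1_abs.
    intros e He; rewrite Rabs_mult; unfold bnd.
    apply Rmult_le_compat; try apply Rabs_pos; [apply F_bound | apply IH]; unfold Tri; lra. }
  pose proof (Rabs_minus_le (F a b) (RInt (fun eta => F a eta * K eta b) b a)).
  assert (Rabs (F a b) <= Mf) by (apply F_bound; unfold Tri; lra).
  rewrite HI in HIa; lra.
Qed.

(* Along the diagonal [s |-> (x + s, y + s)] the Goursat equation reads
   [d/ds K = F - RInt F K], and the diagonal ends on [x = 1] where [K] vanishes. *)
Lemma kernel_picard_step M0 n : 0 <= M0 ->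
  (forall x y, Tri x y -> Rabs (K x y) <= picard_majorant Mf M0 n (x - y)) ->
  forall x y, Tri x y -> Rabs (K x y) <= picard_majorant Mf M0 (S n) (x - y).
Proof.
  intros HS IH x y [Hy [Hyx Hx]].
  set (C := picard_majorant Mf M0 (S n) (x - y)).
  assert (HC : 0 <= C) by (apply picard_majorant_ge_0; auto; lra).
  pose proof (abs_sub_le_of_deriv_bound (fun s => K (x + 1 * s) (y + 1 * s))
    (fun s => pdx K (x + 1 * s) (y + 1 * s) * 1 + pdy K (x + 1 * s) (y + 1 * s) * 1)
    (fun s => C * s) (fun _ => C) 0 (1 - x) ltac:(lra)) as Hmvt; cbv beta in Hmvt.
  replace (x + 1 * (1 - x)) with 1 in Hmvt by ring; replace (x + 1 * 0) with x in Hmvt by ring.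
  replace (y + 1 * 0) with y in Hmvt by ring.
  rewrite K_bc, Rminus_0_l, Rabs_Ropp in Hmvt by (unfold I01; lra).
  assert (C * (1 - x) - C * 0 <= C) by nra.
  enough (Rabs (K x y) <= C * (1 - x) - C * 0) by lra.
  apply Hmvt.
  - intros s _; apply C1_R2_is_derive_line; auto.
  - intros s _; apply (is_derive_ext (fun s => C * s)); [reflexivity | auto_derive; auto; ring].
  - intros s Hs; replace (pdx K (x + 1 * s) (y + 1 * s) * 1 + pdy K (x + 1 * s) (y + 1 * s) * 1)
      with (pdy K (x + 1 * s) (y + 1 * s) + pdx K (x + 1 * s) (y + 1 * s)) by ring.
    rewrite K_goursat by (unfold Tri; lra).
    unfold C; replace (x - y) with ((x + 1 * s) - (y + 1 * s)) by ring.
    apply goursat_rhs_bound; auto; unfold Tri; lra.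
Qed.

Lemma kernel_bound : forall x y, Tri x y -> Rabs (K x y) <= Mf * exp Mf.
Proof.
  destruct (cont2_bounded K 0 1 0 1 (C1_R2_cont K K_C1)) as [M0 HS].
  assert (HS0 : 0 <= M0) by (eapply Rle_trans; [apply Rabs_pos | apply (HS 0 0)]; lra).
  assert (Hn : forall n x y, Tri x y -> Rabs (K x y) <= picard_majorant Mf M0 n (x - y)).
  { induction n as [|n IH]; [|apply kernel_picard_step; auto].
    intros x y [H1 [H2 H3]]; unfold picard_majorant; simpl.
    assert (0 <= Mf * exp (Mf * (x - y))) by (pose proof (exp_pos (Mf * (x - y))); nra).
    assert (Rabs (K x y) <= M0) by (apply HS; lra).
    lra. }
  intros x y Hxy.
  apply Rle_trans with (Mf * exp (Mf * (x - y))).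
  - apply (le_of_le_add_pow_div_fact _ _ M0 (Mf * (x - y))); auto; intros n; apply Hn; auto.
  - destruct Hxy as [H1 [H2 H3]]; apply Rmult_le_compat_l, exp_le_exp_of_le; auto; nra.
Qed.

Lemma kernel_transport_identity W x t : cont1 W -> 0 <= x <= 1 ->
  RInt (fun z => (pdx K x (z - t) + pdy K x (z - t)) * W z) t (x + t)
  = RInt (fun y => F x y * error_repr K W y t) 0 x.
Proof.
  intros HW Hx.
  assert (CK := C1_R2_cont K K_C1).
  set (G := fun eta y => F x eta * K eta y * W (y + t)).
  assert (CG : cont2 G).
  { apply cont2_mult; [apply cont2_mult; auto|].
    - apply (cont2_comp F (fun _ _ => x) (fun eta _ => eta)); auto using cont2_const, cont2_fst.
    - apply (cont2_comp (fun _ y => W y) (fun eta _ => eta) (fun _ y => y + t));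
        auto using cont2_of_cont1_r, cont2_fst, cont2_add_const_r. }
  assert (CFW : cont1 (fun y => F x y * W (y + t))).
  { apply cont1_mult; [apply cont1_section_r | apply cont1_shift]; auto. }
  assert (CG1 : cont1 (fun y => RInt (fun eta => G eta y) y x)).
  { apply (cont1_RInt_param (fun y eta => G eta y)); auto using cont2_swap, cont1_id, cont1_const. }
  assert (CG2 : cont1 (fun y => RInt (fun eta => G y eta) 0 y)).
  { apply (cont1_RInt_param G); auto using cont1_id, cont1_const. }
  transitivity (RInt (fun y => F x y * W (y + t) - RInt (fun eta => G eta y) y x) 0 x).
  { rewrite <- (RInt_shift_kernel (fun x y => pdx K x y + pdy K x y)) by
      (auto; apply cont2_plus; auto using C1_R2_cont_pdx, C1_R2_cont_pdy).
    apply RInt_ext_on; [lra|]; intros y Hy.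
    rewrite (RInt_ext_all (fun eta => G eta y) (fun eta => W (y + t) * (F x eta * K eta y)))
      by (intros; unfold G; ring).
    rewrite RInt_Rscal by (apply ex_RInt_cont1, cont1_mult; [apply cont1_section_r | apply cont1_section_l]; auto).
    rewrite Rplus_comm, K_goursat by (unfold Tri; lra).
    ring. }
  rewrite RInt_Rminus, RInt_triangle_swap by (auto using ex_RInt_cont1).
  unfold error_repr.
  rewrite (RInt_ext_all (fun y => F x y * (W (y + t) - RInt (fun eta => K y eta * W (eta + t)) 0 y))
             (fun y => F x y * W (y + t) - RInt (fun eta => G y eta) 0 y)).
  - rewrite RInt_Rminus by (auto using ex_RInt_cont1); reflexivity.
  - intros y; unfold G.
    rewrite (RInt_ext_all (fun eta => F x y * K y eta * W (eta + t)) (fun eta => F x y * (K y eta * W (eta + t))))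
      by (intros; ring).
    rewrite RInt_Rscal; [ring|].
    apply ex_RInt_cont1, cont1_mult; [apply cont1_section_r | apply cont1_shift]; auto.
Qed.

Variable E : R -> R -> R.
Hypothesis E_C1 : C1_R2 E.
Hypothesis E_pde : forall x t, Dom x t ->
  pdy E x t = pdx E x t + K x 0 * E 0 t + RInt (fun y => F x y * E y t) 0 x.
Hypothesis E_bc : forall t, 0 <= t -> E 1 t = 0.

Let W s := E 0 s.

Let D x t := E x t - error_repr K W x t.

Lemma cont1_trace : cont1 W.
Proof. apply cont1_section_r, C1_R2_cont, E_C1. Qed.

Lemma cont1_defect t : cont1 (fun x => D x t).
Proof.
  apply cont1_minus; [apply cont1_section_l, C1_R2_cont, E_C1|].
  apply cont1_error_repr; auto using C1_R2_cont, cont1_trace.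
Qed.

Lemma is_derive_defect_characteristic s v : 0 <= v <= 1 -> 0 <= s - v ->
  is_derive (fun v => D v (s - v)) v (- RInt (fun y => F v y * D y (s - v)) 0 v).
Proof.
  intros Hv Hsv.
  assert (CK := C1_R2_cont K K_C1); assert (CW := cont1_trace).
  assert (Cshift : cont2 (fun v z => z - s + v)).
  { apply cont2_plus; [apply cont2_minus|]; auto using cont2_snd, cont2_const, cont2_fst. }
  apply (is_derive_ext (fun v => E v (s - v) - W s + RInt (fun z => K v (z - s + v) * W z) (s - v) s)).
  { intros u; unfold D, error_repr; rewrite RInt_shift_kernel by auto.
    replace (u + (s - u)) with s by ring.
    rewrite (RInt_ext_all (fun z => K u (z - (s - u)) * W z) (fun z => K u (z - s + u) * W z))
      by (intros; do 2 f_equal; ring).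
    as_R_eq; ring. }
  eapply is_derive_eq_r.
  - apply (is_derive_plus (K:=R_AbsRing) (V:=R_NormedModule));
      [apply (is_derive_minus (K:=R_AbsRing) (V:=R_NormedModule));
         [apply C1_R2_is_derive_antidiag; auto | apply (is_derive_const (K:=R_AbsRing) (V:=R_NormedModule))]|].
    apply (is_derive_RInt_param_bounds (fun v z => K v (z - s + v) * W z)
             (fun v z => (pdx K v (z - s + v) + pdy K v (z - s + v)) * W z) (fun v => s - v) (fun _ => s) v (-1) 0).
    + intros u z; apply (is_derive_scal_l (K:=R_AbsRing) (V:=R_NormedModule) (fun v => K v (z - s + v))).
      apply C1_R2_is_derive_diag; auto.
    + apply cont2_mult; [apply cont2_plus|apply cont2_of_cont1_r; auto];
        apply (cont2_comp _ (fun v _ => v)); auto using C1_R2_cont_pdx, C1_R2_cont_pdy, cont2_fst.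
    + apply cont2_mult; [apply (cont2_comp K (fun v _ => v)) | apply cont2_of_cont1_r]; auto using cont2_fst.
    + auto_derive; auto; ring.
    + apply (is_derive_const (K:=R_AbsRing) (V:=R_NormedModule)).
  - pose proof (kernel_transport_identity W v (s - v) CW Hv) as KI.
    replace (v + (s - v)) with s in KI by ring.
    rewrite (RInt_ext_all (fun z => (pdx K v (z - (s - v)) + pdy K v (z - (s - v))) * W z)
               (fun z => (pdx K v (z - s + v) + pdy K v (z - s + v)) * W z)) in KI
      by (intros z; replace (z - (s - v)) with (z - s + v) by ring; reflexivity).
    rewrite KI, E_pde by (unfold Dom; lra).
    unfold D; rewrite (RInt_ext_all (fun y => F v y * (E y (s - v) - error_repr K W y (s - v)))
                         (fun y => F v y * E y (s - v) - F v y * error_repr K W y (s - v))) by (intros; ring).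
    rewrite RInt_Rminus.
    + replace (s - v - s + v) with 0 by ring; unfold W; as_R_eq; ring.
    + apply ex_RInt_cont1, cont1_mult; [apply cont1_section_r | apply cont1_section_l]; auto using C1_R2_cont.
    + apply ex_RInt_cont1, cont1_mult; [apply cont1_section_r | apply cont1_error_repr]; auto.
Qed.

Lemma defect_picard_step L M0 n : 0 <= M0 ->
  (forall y t, 0 <= y <= 1 -> 0 <= t -> y + t <= L -> Rabs (D y t) <= M0 * ((Mf * y) ^ n / INR (fact n))) ->
  forall x t, 0 <= x <= 1 -> 0 <= t -> x + t <= L ->
  Rabs (D x t) <= M0 * ((Mf * x) ^ S n / INR (fact (S n))).
Proof.
  intros HM0 IH x t Hx Ht HL.
  set (s := x + t).
  pose proof (abs_sub_le_of_deriv_bound (fun v => D v (s - v))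
    (fun v => - RInt (fun y => F v y * D y (s - v)) 0 v)
    (fun e => M0 * ((Mf * e) ^ S n / INR (fact (S n))))
    (fun e => M0 * (Mf * ((Mf * e) ^ n / INR (fact n)))) 0 x ltac:(lra)) as Hmvt; cbv beta in Hmvt.
  replace (s - x) with t in Hmvt by (unfold s; ring).
  assert (HD0 : D 0 (s - 0) = 0) by (unfold D, error_repr, W; rewrite RInt_Rpoint, Rplus_0_l; ring).
  rewrite HD0, Rminus_0_r, Rmult_0_r, pow_i, Rdiv_0_l, Rmult_0_r, Rminus_0_r in Hmvt by lia.
  apply Hmvt.
  - intros v Hv; apply is_derive_defect_characteristic; unfold s; lra.
  - intros v _; apply is_derive_pow_div_fact.
  - intros v Hv; rewrite Rabs_Ropp.
    set (q := (Mf * v) ^ n / INR (fact n)).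
    assert (Hq : 0 <= q) by (apply Rdiv_le_0_compat; [apply pow_le; nra | apply lt_0_INR, lt_O_fact]).
    eapply Rle_trans; [apply RInt_abs_le_const with (K := Mf * (M0 * q))|].
    + apply ex_RInt_cont1, cont1_mult; [apply cont1_section_r, F_cont | apply cont1_defect].
    + intros y Hy; rewrite Rmin_left, Rmax_right in Hy by lra; rewrite Rabs_mult.
      apply Rmult_le_compat; try apply Rabs_pos; [apply F_bound; unfold Tri; lra|].
      eapply Rle_trans; [apply IH; unfold s; lra|].
      apply Rmult_le_compat_l, Rmult_le_compat_r; auto.
      * left; apply Rinv_0_lt_compat, lt_0_INR, lt_O_fact.
      * apply pow_incr; split; nra.
    + rewrite Rminus_0_r, Rabs_right by lra.
      assert (0 <= Mf * (M0 * q)) by (apply Rmult_le_pos; auto; apply Rmult_le_pos; auto).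
      replace (M0 * (Mf * q)) with (Mf * (M0 * q)) by ring; nra.
Qed.

(* The defect [D] vanishes at [x = 0] and obeys [d/dv D v (s - v) = - RInt F D]: Picard iteration
   on the trapezoid [x + t <= L] forces it to zero. *)
Lemma error_representation x t : Dom x t -> E x t = error_repr K W x t.
Proof.
  intros [Hx Ht].
  destruct (error_repr_bounded K W (x + t) (C1_R2_cont K K_C1) cont1_trace) as [S1 HS1].
  destruct (cont2_bounded E 0 1 0 (x + t) (C1_R2_cont E E_C1)) as [S2 HS2].
  assert (H0 : forall y s, 0 <= y <= 1 -> 0 <= s -> y + s <= x + t -> Rabs (D y s) <= S2 + S1).
  { intros y s Hy Hs Hys; eapply Rle_trans; [apply Rabs_minus_le|].
    apply Rplus_le_compat; [apply HS2 | apply HS1]; lra. }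
  assert (HS : 0 <= S2 + S1) by (eapply Rle_trans; [apply Rabs_pos | apply (H0 0 0)]; lra).
  assert (Hn : forall n y s, 0 <= y <= 1 -> 0 <= s -> y + s <= x + t ->
                 Rabs (D y s) <= (S2 + S1) * ((Mf * y) ^ n / INR (fact n))).
  { induction n as [|n IH]; [|apply defect_picard_step; auto].
    intros y s Hy Hs Hys; simpl; rewrite Rdiv_1_r, Rmult_1_r; auto. }
  assert (Hle : Rabs (D x t) <= 0).
  { apply (le_of_le_add_pow_div_fact _ 0 (S2 + S1) (Mf * x)); auto.
    intros n; rewrite Rplus_0_l; apply Hn; lra. }
  pose proof (Rabs_pos (D x t)); assert (Rabs (D x t) = 0) as HD by lra.
  apply Rabs_eq_0 in HD; unfold D in HD; lra.
Qed.

Lemma trace_eq_0 s : 1 <= s -> W s = 0.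
Proof.
  intros Hs.
  pose proof (error_representation 1 (s - 1) ltac:(unfold Dom; lra)) as Hrep.
  unfold error_repr in Hrep; rewrite E_bc in Hrep by lra.
  rewrite (RInt_zero_on (fun y => K 1 y * W (y + (s - 1)))) in Hrep; [| lra |].
  - replace (1 + (s - 1)) with s in Hrep by ring; lra.
  - intros y Hy; rewrite K_bc by (unfold I01; lra); ring.
Qed.

Lemma error_eq_0 x t : 0 <= x <= 1 -> 1 <= t -> E x t = 0.
Proof.
  intros Hx Ht; rewrite error_representation by (unfold Dom; lra).
  apply error_repr_eq_0; auto; [lra | apply trace_eq_0].
Qed.

Lemma trace_growth_bound x : 0 <= x <= 1 ->
  Rabs (W x) <= Rabs (E x 0) + Mf * exp Mf * RInt (fun z => Rabs (W z)) 0 x.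
Proof.
  intros Hx.
  pose proof (error_representation x 0 ltac:(unfold Dom; lra)) as Hrep; unfold error_repr in Hrep.
  rewrite Rplus_0_r, (RInt_ext_all (fun y => K x y * W (y + 0)) (fun y => K x y * W y)) in Hrep
    by (intros; rewrite Rplus_0_r; reflexivity).
  replace (W x) with (E x 0 + RInt (fun y => K x y * W y) 0 x) by lra.
  eapply Rle_trans; [apply Rabs_triang | apply Rplus_le_compat_l].
  assert (CKW : cont1 (fun y => K x y * W y)).
  { apply cont1_mult; [apply cont1_section_r, C1_R2_cont | apply cont1_trace]; auto. }
  eapply Rle_trans; [apply abs_RInt_le_cont; auto; lra|].
  rewrite <- RInt_Rscal by (apply ex_RInt_cont1, cont1_abs, cont1_trace).
  apply RInt_le_cont; auto using cont1_abs, cont1_scal, cont1_trace; try lra.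
  intros y Hy; rewrite Rabs_mult; apply Rmult_le_compat_r; [apply Rabs_pos | apply kernel_bound; unfold Tri; lra].
Qed.

Lemma trace_L2_bound : L2norm W <= (1 + Mf * exp Mf * exp (Mf * exp Mf)) * L2norm (fun x => E x 0).
Proof.
  set (B := Mf * exp Mf).
  assert (HB : 0 <= B) by (unfold B; pose proof (exp_pos Mf); nra).
  assert (HBe : 0 <= B * exp B) by (pose proof (exp_pos B); nra).
  assert (CE0 : cont1 (fun x => E x 0)) by (apply cont1_section_l, C1_R2_cont, E_C1).
  pose proof (gronwall_le (fun x => Rabs (W x)) (fun x => Rabs (E x 0)) B (cont1_abs _ cont1_trace)
    (cont1_abs _ CE0) HB (fun x _ => Rabs_pos (E x 0)) trace_growth_bound) as Hg.
  set (c := B * exp B * RInt (fun x => Rabs (E x 0)) 0 1) in Hg.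
  assert (Hc : c <= B * exp B * L2norm (fun x => E x 0)).
  { apply Rmult_le_compat_l; [| apply RInt_abs_le_L2norm]; auto. }
  assert (Hc0 : 0 <= c).
  { apply Rmult_le_pos; auto; apply RInt_ge_0_cont; auto using cont1_abs; intros; [lra | apply Rabs_pos]. }
  eapply Rle_trans; [apply (L2norm_le_of_abs_le W (fun x => Rabs (E x 0) + c))|];
    auto using cont1_trace, cont1_plus, cont1_abs, cont1_const.
  eapply Rle_trans; [apply L2norm_plus_le; auto using cont1_abs, cont1_const|].
  rewrite L2norm_abs, L2norm_const by auto; lra.
Qed.

Lemma error_pointwise_bound x t : 0 <= x <= 1 -> 0 <= t ->
  Rabs (E x t) <= Rabs (W (x + t)) + Mf * exp Mf * RInt (fun z => Rabs (W z)) 0 1.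
Proof.
  intros Hx Ht; set (B := Mf * exp Mf).
  assert (HB : 0 <= B) by (unfold B; pose proof (exp_pos Mf); nra).
  assert (CW := cont1_trace).
  rewrite error_representation by (unfold Dom; lra); unfold error_repr.
  eapply Rle_trans; [apply Rabs_minus_le | apply Rplus_le_compat_l].
  eapply Rle_trans; [apply abs_RInt_le_cont; [lra | apply cont1_mult; [apply cont1_section_r, C1_R2_cont | apply cont1_shift]]; auto|].
  apply Rle_trans with (RInt (fun y => B * Rabs (W (y + t))) 0 x).
  { apply RInt_le_cont; auto using cont1_abs, cont1_mult, cont1_scal, cont1_shift; try lra.
    - apply cont1_abs, cont1_mult; [apply cont1_section_r, C1_R2_cont | apply cont1_shift]; auto.
    - intros y Hy; rewrite Rabs_mult; apply Rmult_le_compat_r; [apply Rabs_pos | apply kernel_bound; unfold Tri; lra]. }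
  rewrite RInt_Rscal by (apply ex_RInt_cont1, cont1_abs, cont1_shift; auto).
  apply Rmult_le_compat_l; auto.
  rewrite (RInt_shift (fun z => Rabs (W z))), Rplus_0_l by (apply cont1_abs; auto).
  rewrite <- (RInt_eq_of_zero_after (fun z => Rabs (W z)) (x + t + 1)); auto using cont1_abs; try lra.
  - apply RInt_le_RInt_wider; auto using cont1_abs; try lra; intros; apply Rabs_pos.
  - intros s Hs; rewrite trace_eq_0; auto; apply Rabs_R0.
Qed.

Lemma error_L2_bound t : 0 <= t -> L2norm (fun x => E x t) <= (1 + Mf * exp Mf) * L2norm W.
Proof.
  intros Ht; set (B := Mf * exp Mf); set (A := RInt (fun z => Rabs (W z)) 0 1).
  assert (HB : 0 <= B) by (unfold B; pose proof (exp_pos Mf); nra).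
  assert (CW := cont1_trace).
  assert (HA : A <= L2norm W) by (apply RInt_abs_le_L2norm; auto).
  assert (HA0 : 0 <= A) by (apply RInt_ge_0_cont; auto using cont1_abs; intros; [lra | apply Rabs_pos]).
  eapply Rle_trans; [apply (L2norm_le_of_abs_le _ (fun x => Rabs (W (x + t)) + B * A))|].
  - apply cont1_section_l, C1_R2_cont, E_C1.
  - apply cont1_plus; auto using cont1_abs, cont1_shift, cont1_const.
  - intros x Hx; apply error_pointwise_bound; auto.
  - eapply Rle_trans; [apply L2norm_plus_le; auto using cont1_abs, cont1_shift, cont1_const|].
    rewrite (L2norm_abs (fun x => W (x + t))), L2norm_const by nra.
    pose proof (L2norm_shift_le W t CW Ht trace_eq_0); nra.
Qed.

Lemma error_exp_decay t c : 0 <= t -> 0 < c ->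
  L2norm (fun x => E x t) <=
    (exp c * (1 + (Mf * exp Mf) * exp (Mf * exp Mf)) * (1 + Mf * exp Mf))
    * exp (- c * t) * L2norm (fun x => E x 0).
Proof.
  intros Ht Hc; set (B := Mf * exp Mf).
  assert (HB : 0 <= B) by (unfold B; pose proof (exp_pos Mf); nra).
  assert (HBe : 0 <= B * exp B) by (pose proof (exp_pos B); nra).
  pose proof (L2norm_ge_0 (fun x => E x 0)) as HE0.
  pose proof (exp_pos c); pose proof (exp_pos (- c * t)).
  assert (HM : 0 <= (1 + B * exp B) * (1 + B) * L2norm (fun x => E x 0)) by (apply Rmult_le_pos; nra).
  destruct (Rlt_dec t 1) as [Ht1|Ht1].
  - assert (Hdecay : 1 <= exp c * exp (- c * t)).
    { rewrite <- exp_plus, <- exp_0; apply exp_le_exp_of_le; nra. }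
    pose proof (error_L2_bound t Ht) as H1; pose proof trace_L2_bound as H2; fold B in H1, H2.
    apply Rle_trans with ((1 + B * exp B) * (1 + B) * L2norm (fun x => E x 0)); [nra|].
    replace (exp c * (1 + B * exp B) * (1 + B) * exp (- c * t) * L2norm (fun x => E x 0))
      with ((exp c * exp (- c * t)) * ((1 + B * exp B) * (1 + B) * L2norm (fun x => E x 0))) by ring.
    nra.
  - rewrite L2norm_zero_on by (intros x Hx; apply error_eq_0; lra).
    replace (exp c * (1 + B * exp B) * (1 + B) * exp (- c * t) * L2norm (fun x => E x 0))
      with ((exp c * exp (- c * t)) * ((1 + B * exp B) * (1 + B) * L2norm (fun x => E x 0))) by ring.
    apply Rmult_le_pos; nra.
Qed.

End ObserverError.

Lemma abs_le_of_is_lub (f F : R -> R -> R) Mf :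
  (forall x y, Tri x y -> F x y = f x y) ->
  is_lub (fun r => exists x y, Tri x y /\ r = Rabs (f x y)) Mf ->
  (forall x y, Tri x y -> Rabs (F x y) <= Mf) /\ 0 <= Mf.
Proof.
  intros HF [Hub _].
  assert (Hb : forall x y, Tri x y -> Rabs (F x y) <= Mf).
  { intros x y Hxy; rewrite HF by auto; apply Hub; exists x, y; auto. }
  split; auto; eapply Rle_trans; [apply Rabs_pos | apply (Hb 0 0); unfold Tri; lra].
Qed.

Lemma goursat_of_restriction (f k F K kx ky : R -> R -> R) :
  (forall x y, Tri x y -> F x y = f x y) ->
  (forall x y, Tri x y -> K x y = k x y /\ pdx K x y = kx x y /\ pdy K x y = ky x y) ->
  (forall x y, Tri x y -> ky x y + kx x y = f x y - RInt (fun eta => f x eta * k eta y) y x) ->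
  forall x y, Tri x y -> pdy K x y + pdx K x y = F x y - RInt (fun eta => F x eta * K eta y) y x.
Proof.
  intros HF HK Hgoursat x y Hxy.
  destruct (HK x y Hxy) as [_ [-> ->]]; rewrite Hgoursat, HF by auto.
  destruct Hxy as [Hy [Hyx Hx]]; f_equal; apply RInt_ext_on; auto.
  intros eta Heta; rewrite HF, (proj1 (HK eta y ltac:(unfold Tri; lra))) by (unfold Tri; lra); reflexivity.
Qed.

Lemma error_pde_of_restriction (f k F K : R -> R -> R) (g : R -> R)
  (u ux ut uh uhx uht Hu Huh : R -> R -> R) :
  C1_R2 Hu -> C1_R2 Huh -> cont2 F ->
  (forall x y, Tri x y -> F x y = f x y) ->
  (forall x, 0 <= x <= 1 -> K x 0 = k x 0) ->
  (forall x t, Dom x t -> Hu x t = u x t /\ pdx Hu x t = ux x t /\ pdy Hu x t = ut x t) ->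
  (forall x t, Dom x t -> Huh x t = uh x t /\ pdx Huh x t = uhx x t /\ pdy Huh x t = uht x t) ->
  (forall x t, Dom x t -> ut x t = ux x t + g x * u 0 t + RInt (fun y => f x y * u y t) 0 x) ->
  (forall x t, Dom x t -> uht x t = uhx x t + g x * uh 0 t + RInt (fun y => f x y * uh y t) 0 x
                                   + (g x - k x 0) * (u 0 t - uh 0 t)) ->
  forall x t, Dom x t ->
    pdy (fun x t => Hu x t - Huh x t) x t =
    pdx (fun x t => Hu x t - Huh x t) x t + K x 0 * (Hu 0 t - Huh 0 t)
    + RInt (fun y => F x y * (Hu y t - Huh y t)) 0 x.
Proof.
  intros HHu HHuh CF HFT HKT HuT HuhT HuPDE HuhPDE x t [Hx Ht].
  destruct (C1_R2_minus Hu Huh HHu HHuh) as [_ [-> ->]].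
  destruct (HuT x t ltac:(split; lra)) as [_ [-> ->]], (HuhT x t ltac:(split; lra)) as [_ [-> ->]].
  rewrite HuPDE, HuhPDE, HKT, (proj1 (HuT 0 t ltac:(split; lra))), (proj1 (HuhT 0 t ltac:(split; lra)))
    by (try split; lra).
  assert (Hext : forall (v Hv : R -> R -> R), (forall y, Dom y t -> Hv y t = v y t) ->
            RInt (fun y => f x y * v y t) 0 x = RInt (fun y => F x y * Hv y t) 0 x).
  { intros v Hv Heq; apply RInt_ext_on; [lra|]; intros y Hy.
    rewrite HFT, Heq by (unfold Tri, Dom; lra); reflexivity. }
  rewrite (Hext u Hu), (Hext uh Huh) by (intros y Hy; apply (HuT y t Hy) || apply (HuhT y t Hy)).
  rewrite (RInt_ext_all (fun y => F x y * (Hu y t - Huh y t)) (fun y => F x y * Hu y t - F x y * Huh y t))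
    by (intros; ring).
  rewrite RInt_Rminus by (apply ex_RInt_cont1, cont1_mult; [apply cont1_section_r | apply cont1_section_l];
                          auto using C1_R2_cont).
  ring.
Qed.
Theorem theorem2
  (f : R -> R -> R) (g : R -> R) (Mf : R)
  (k kx ky : R -> R -> R)
  (U Udot u0 u0' uh0 uh0' : R -> R)
  (u ux ut uh uhx uht : R -> R -> R)
  (* regularity of f and g, and M_f = sup_T |f| *)
  (Hf : exists fx fy, C1_on2 Tri f fx fy)
  (Hg : exists g', C1_on I01 g g')
  (HMf : is_lub (fun r => exists x y, Tri x y /\ r = Rabs (f x y)) Mf)
  (* k is a C^1(T) solution of the Goursat problem *)
  (Hk : C1_on2 Tri k kx ky)
  (HkPDE : forall x y, Tri x y ->
      ky x y + kx x y = f x y - RInt (fun eta => f x eta * k eta y) y x)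
  (HkBC : forall y, I01 y -> k 1 y = 0)
  (* input and initial data *)
  (HU : C1_on Rplus_set U Udot)
  (Hu0 : C1_on I01 u0 u0')
  (Huh0 : C1_on I01 uh0 uh0')
  (* compatibility conditions, with p1(x) = g(x) - k(x,0) *)
  (Hcomp1 : u0 1 = U 0)
  (Hcomp2 : Udot 0 = u0' 1 + g 1 * u0 0 + RInt (fun y => f 1 y * u0 y) 0 1)
  (Hcomp3 : uh0 1 = U 0)
  (Hcomp4 : Udot 0 = uh0' 1 + g 1 * uh0 0 + RInt (fun y => f 1 y * uh0 y) 0 1
                     + (g 1 - k 1 0) * (u0 0 - uh0 0))
  (* u is a classical solution of the plant *)
  (Hu : C1_on2 Dom u ux ut)
  (HuPDE : forall x t, Dom x t ->
      ut x t = ux x t + g x * u 0 t + RInt (fun y => f x y * u y t) 0 x)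
  (HuBC : forall t, 0 <= t -> u 1 t = U t)
  (HuIC : forall x, I01 x -> u x 0 = u0 x)
  (* uh is a classical solution of the observer *)
  (Huh : C1_on2 Dom uh uhx uht)
  (HuhPDE : forall x t, Dom x t ->
      uht x t = uhx x t + g x * uh 0 t + RInt (fun y => f x y * uh y t) 0 x
                + (g x - k x 0) * (u 0 t - uh 0 t))
  (HuhBC : forall t, 0 <= t -> uh 1 t = U t)
  (HuhIC : forall x, I01 x -> uh x 0 = uh0 x) :
  (forall t c, 0 <= t -> 0 < c ->
     L2norm (fun x => u x t - uh x t) <=
       (exp c * (1 + (Mf * exp Mf) * exp (Mf * exp Mf)) * (1 + Mf * exp Mf))
       * exp (- c * t) * L2norm (fun x => u0 x - uh0 x))
  /\ (forall x t, I01 x -> 1 <= t -> uh x t = u x t).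
Proof.
  destruct Hf as [fx [fy [F [HF HFT]]]], Hk as [K [HK HKT]].
  destruct Hu as [Hu' [HHu HHuT]], Huh as [Huh' [HHuh HHuhT]].
  set (E := fun x t => Hu' x t - Huh' x t).
  assert (CF := C1_R2_cont F HF).
  assert (HFf : forall x y, Tri x y -> F x y = f x y) by (intros; apply HFT; auto).
  destruct (abs_le_of_is_lub f F Mf HFf HMf) as [F_bound Mf_ge_0].
  assert (K_goursat := goursat_of_restriction f k F K kx ky HFf HKT HkPDE).
  assert (K_bc : forall y, I01 y -> K 1 y = 0).
  { intros y Hy; rewrite (proj1 (HKT 1 y ltac:(unfold Tri, I01 in *; lra))); auto. }
  assert (E_pde := error_pde_of_restriction f k F K g u ux ut uh uhx uht Hu' Huh' HHu HHuh CF HFf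
    (fun x Hx => proj1 (HKT x 0 ltac:(unfold Tri; lra))) HHuT HHuhT HuPDE HuhPDE).
  assert (HuE : forall x t, Dom x t -> u x t - uh x t = E x t).
  { intros x t Hd; unfold E; rewrite (proj1 (HHuT x t Hd)), (proj1 (HHuhT x t Hd)); reflexivity. }
  assert (E_bc : forall t, 0 <= t -> E 1 t = 0).
  { intros t Ht; rewrite <- HuE, HuBC, HuhBC by (unfold Dom; lra); ring. }
  pose proof (proj1 (C1_R2_minus Hu' Huh' HHu HHuh)) as E_C1.
  split.
  - intros t c Ht Hc.
    rewrite (L2norm_ext_on _ (fun x => E x t)), (L2norm_ext_on (fun x => u0 x - uh0 x) (fun x => E x 0))
      by (intros x Hx; rewrite <- HuE, ?HuIC, ?HuhIC by (unfold Dom, I01; lra); reflexivity).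
    apply (error_exp_decay F K Mf); auto.
  - intros x t Hx Ht.
    pose proof (HuE x t ltac:(unfold Dom, I01 in *; lra)).
    pose proof (error_eq_0 F K Mf CF HK Mf_ge_0 F_bound K_goursat K_bc E E_C1 E_pde E_bc x t Hx Ht); lra.
Qed.
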